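(* Let $A$ be an ERNNA without $\epsilon$-transitions, of degree $k$ and with $n$ orbits. Then (1) $L_\alpha(A)=L_\alpha(\mathrm{nd}(A))$; (2) $L_0(\mathrm{nd}(A))$ is closed under $\alpha$-equivalence; and moreover $\mathrm{nd}(A)$ is of degree $k$ and has at most $n\cdot 2^k$ orbits.
   Context: Names $\mathbb{A}$ countably infinite, $G$ finite permutations; nominal sets (each element has a least finite support $\mathrm{supp}(x)$), orbits, equivariance as usual; $\mathrm{Fix}(N)=\{\pi\in G\mid\pi(a)=a\ \forall a\in N\}$. $[\mathbb{A}]X$: $\mathbb{A}\times X$ modulo $(a,x)\sim(b,y)$ iff $(a\,c)\cdot x=(b\,c)\cdot y$ for some $c$ outside the supports; class $\langle a\rangle x$. $\overline{\mathbb{A}}=\mathbb{A}\cup\{|a\}$; bar strings are words over it; $\equiv_\alpha$ is the least equivalence with $w|av\equiv_\alpha w|bu$ whenever $\langle a\rangle v=\langle b\rangle u$. Free occurrence of plain $a$: no $|a$ to its left; $\mathrm{FN}(w)$; $[S]=\{w\mid\mathrm{FN}(w)\subseteq S\}$. ERNNA $A=(Q,\to,s,f)$: orbit-finite nominal $Q$, $\mathrm{supp}(s)=\emptyset$, equivariant $\to\subseteq Q\times(\overline{\mathbb{A}}\cup\{\epsilon\})\times Q$, equivariant $f:Q\to\{0,1,\top\}$; $q\xrightarrow{|a}q'$, $\langle a\rangle q'=\langle b\rangle q''$ imply $q\xrightarrow{|b}q''$; finite branching up to $\alpha$-equivalence ($\{(a,q')\mid q\xrightarrow{a}q'\}$,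 $\{q'\mid q\xrightarrow{\epsilon}q'\}$, $\{\langle a\rangle q'\mid q\xrightarrow{|a}q'\}$ finite); $\top$-states have empty support and no outgoing transitions. Degree: $\max_q|\mathrm{supp}(q)|$. $L_{pre}(A)=\{(w,f(q))\mid s\xrightarrow{w}q,f(q)\in\{1,\top\}\}$, $L_0(A)=[\emptyset]\cap(\{w\mid(w,1)\in L_{pre}(A)\}\cup\{vu\mid(v,\top)\in L_{pre}(A),u\in\overline{\mathbb{A}}^*\})$, $L_\alpha(A)=L_0(A)/{\equiv_\alpha}$. Name-dropping ERNNA of an $\epsilon$-free $A=(Q,\to,s,f)$: $\mathrm{nd}(A)=(Q',\to',s',f')$ with $Q'=\{q|_N\mid q\in Q,N\subseteq\mathrm{supp}(q)\}$ where $q|_N=\{\pi\cdot q\mid\pi\in\mathrm{Fix}(N)\}$ (with action $\pi\cdot q|_N=(\pi\cdot q)|_{\pi\cdot N}$), $s'=s|_{\mathrm{supp}(s)}$, $f'(q|_N)=f(q)$, and transitions $q|_N\xrightarrow{a}{}'q'|_{N'}$ whenever $q\xrightarrow{a}q'$, $N'\subseteq N$ and $a\in N$; and $q|_N\xrightarrow{|a}{}'q'|_{N'}$ whenever $q\xrightarrow{|b}q''$, $N''\subseteq\mathrm{supp}(q'')\cap(N\cup\{b\})$ and $\langle a\rangle(q'|_{N'})=\langle b\rangle(q''|_{N''})$. *)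

From Stdlib Require Import FunctionalExtensionality PropExtensionality
  ProofIrrelevance IndefiniteDescription Relation_Operators.
From mathcomp Require Import all_boot.

Set Implicit Arguments.
Unset Strict Implicit.
Unset Printing Implicit Defensive.

Definition name := nat.

Record fperm := FPerm {
  pf :> name -> name;
  pinv : name -> name;
  pfK : cancel pf pinv;
  pinvK : cancel pinv pf;
  pfin : exists s : seq name, forall a, a \notin s -> pf a = a }.

Definition fperm_id : fperm.
Proof.
refine (@FPerm (fun x => x) (fun x => x) (fun _ => erefl) (fun _ => erefl) _).
by exists [::].
Defined.

Section PermOps.
Variables p q : fperm.

Lemma comp_K : cancel (fun x => p (q x)) (fun x => pinv q (pinv p x)).
Proof. by move=> x; rewrite !pfK. Qed.
Lemma comp_invK : cancel (fun x => pinv q (pinv p x)) (fun x => p (q x)).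
Proof. by move=> x; rewrite !pinvK. Qed.
Lemma comp_fin : exists s : seq name, forall a, a \notin s -> p (q a) = a.
Proof.
case: (pfin p) => sp Hp; case: (pfin q) => sq Hq; exists (sp ++ sq) => a.
by rewrite mem_cat negb_or => /andP[ap aq]; rewrite Hq // Hp.
Qed.
Definition fperm_comp : fperm := FPerm comp_K comp_invK comp_fin.

Lemma inv_fin : exists s : seq name, forall a, a \notin s -> pinv p a = a.
Proof.
case: (pfin p) => s H; exists s => a Ha.
by rewrite -{1}(H a Ha) pfK.
Qed.
Definition fperm_inv : fperm := FPerm (pinvK p) (pfK p) inv_fin.
End PermOps.

Section Swap.
Variables a b : name.
Definition sw (x : name) : name :=
  if x == a then b else if x == b then a else x.
Lemma swK : cancel sw sw.
Proof.
move=> x; rewrite /sw.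
case: (x =P a) => [->|xa]; first by case: (b =P a) => [->|]; rewrite ?eqxx.
case: (x =P b) => [->|xb]; first by rewrite eqxx.
by move/eqP/negbTE: xa => ->; move/eqP/negbTE: xb => ->.
Qed.
Lemma sw_fin : exists s : seq name, forall x, x \notin s -> sw x = x.
Proof.
exists [:: a; b] => x; rewrite !inE negb_or => /andP[/negbTE xa /negbTE xb].
by rewrite /sw xa xb.
Qed.
Definition fperm_swap : fperm := FPerm swK swK sw_fin.
End Swap.

(* G-sets (sets with a group action of G).  Nominality is a separate  *)
(* predicate below.                                                    *)
Record nomType := NomType {
  ncar :> Type;
  nact : fperm -> ncar -> ncar;
  nact_id : forall x, nact fperm_id x = x;
  nact_comp : forall p q x, nact (fperm_comp p q) x = nact p (nact q x);
  nact_ext : forall p q : fperm, pf p =1 pf q -> forall x, nact p x = nact q x }.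

Section Nominal.
Variable X : nomType.

Definition supports (x : X) (s : seq name) :=
  forall p : fperm, (forall a, a \in s -> p a = a) -> nact p x = x.

Definition least_supp (x : X) (s : seq name) :=
  supports x s /\ forall t, supports x t -> {subset s <= t}.

(* a \in supp(x): a belongs to every finite support of x
   (for a nominal set this is exactly the least finite support) *)
Definition in_supp (x : X) (a : name) := forall s, supports x s -> a \in s.

Definition is_nominal := forall x : X, exists s, least_supp x s.

Definition supp_card (x : X) (m : nat) :=
  exists s : seq name, [/\ uniq s, size s = m & forall a, in_supp x a <-> a \in s].

Definition same_orbit (x y : X) := exists p : fperm, nact p x = y.

Definition has_orbits (n : nat) :=
  exists r : nat -> X,
    (forall i j, i < n -> j < n -> same_orbit (r i) (r j) -> i = j) /\
    (forall x, exists2 i, i < n & same_orbit (r i) x).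

(* <a>x = <b>y in [A]X : (a c).x = (b c).y for some c outside the supports *)
Definition abs_eq (a : name) (x : X) (b : name) (y : X) :=
  exists c : name, [/\ c <> a /\ ~ in_supp x c, c <> b /\ ~ in_supp y c
                     & nact (fperm_swap a c) x = nact (fperm_swap b c) y].

Definition fixes (p : fperm) (N : name -> Prop) := forall a, N a -> p a = a.

Definition restr (q : X) (N : name -> Prop) : X -> Prop :=
  fun y => exists2 p, fixes p N & y = nact p q.

Definition imgset (p : fperm) (S : X -> Prop) : X -> Prop :=
  fun y => exists2 x, S x & y = nact p x.

Lemma supports_act (x : X) (p : fperm) t :
  supports (nact p x) t -> supports x (map (pinv p) t).
Proof.
move=> H s Hs.
pose tau := fperm_comp p (fperm_comp s (fperm_inv p)).
have Htau : nact tau (nact p x) = nact p x.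
  apply: H => c ct /=; rewrite Hs ?pinvK //; exact: map_f.
have E1 : nact p (nact s x) = nact p x.
  rewrite -Htau -!nact_comp; apply: nact_ext => y /=; by rewrite pfK.
have -> : nact s x = nact (fperm_inv p) (nact p (nact s x)).
  by rewrite -nact_comp -[LHS]nact_id; apply: nact_ext => y /=; rewrite pfK.
by rewrite E1 -nact_comp -[RHS]nact_id; apply: nact_ext => y /=; rewrite pfK.
Qed.

Lemma in_supp_act (x : X) (p : fperm) a :
  in_supp x (pinv p a) -> in_supp (nact p x) a.
Proof.
move=> H t Ht; case/mapP: (H _ (supports_act Ht)) => c ct e.
have -> : a = c by rewrite -(pinvK p a) e pinvK.
exact: ct.
Qed.

Lemma img_restr (x : X) (p : fperm) (N : name -> Prop) :
  imgset p (restr x N) = restr (nact p x) (fun a => N (pinv p a)).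
Proof.
apply: functional_extensionality => y; apply: propositional_extensionality.
split.
- case=> z [s Hs ->] ->.
  exists (fperm_comp p (fperm_comp s (fperm_inv p))).
    by move=> a Na /=; rewrite Hs // pinvK.
  rewrite -!nact_comp; apply: nact_ext => z0 /=; by rewrite pfK.
- case=> s Hs ->.
  exists (nact (fperm_comp (fperm_inv p) (fperm_comp s p)) x).
    exists (fperm_comp (fperm_inv p) (fperm_comp s p)) => //.
    by move=> a Na /=; rewrite Hs ?pfK // pfK.
  rewrite -!nact_comp; apply: nact_ext => z0 /=; by rewrite pinvK.
Qed.

End Nominal.

Definition blet := (bool * name)%type.
Definition Pl (a : name) : blet := (false, a).
Definition Br (a : name) : blet := (true, a).
Definition word := seq blet.

Definition bact (p : fperm) (l : blet) : blet := (l.1, p l.2).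
Definition wact (p : fperm) (w : word) : word := map (bact p) w.

Lemma wact_id w : wact fperm_id w = w.
Proof. by elim: w => //= [[c d] w ->]. Qed.
Lemma wact_comp p q w : wact (fperm_comp p q) w = wact p (wact q w).
Proof. by elim: w => //= [[c d] w ->]. Qed.
Lemma wact_ext (p q : fperm) : pf p =1 pf q -> forall w, wact p w = wact q w.
Proof. by move=> E; elim=> //= [[c d] w ->]; rewrite /bact /= E. Qed.

Definition wnom : nomType := NomType wact_id wact_comp wact_ext.

Definition fn (w : word) (a : name) :=
  exists w1 w2, w = w1 ++ Pl a :: w2 /\ Br a \notin w1.
Definition closed_word (w : word) := forall a, ~ fn w a.

Definition astep (w1 w2 : word) :=
  exists w a v b u, [/\ w1 = w ++ Br a :: v, w2 = w ++ Br b :: u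
                      & abs_eq (X := wnom) a v b u].
Definition aeq : word -> word -> Prop := clos_refl_sym_trans word astep.

Inductive fval := F0 | F1 | Ftop.

Record ernna := Ernna {
  est : nomType;
  etr : est -> option blet -> est -> Prop;   (* None = epsilon *)
  estart : est;
  efin : est -> fval }.

Definition lact (p : fperm) (l : option blet) := omap (bact p) l.

Definition is_ernna (A : ernna) :=
  [/\ is_nominal (est A),
      (exists n, has_orbits (est A) n),
      (forall a, ~ in_supp (estart A) a),
      (forall p (q : est A) l (q' : est A), etr q l q' ->
          etr (nact p q) (lact p l) (nact p q')) &
      (forall p (q : est A), efin (nact p q) = efin q)]
  /\ (forall (q : est A) a (q' : est A) b (q'' : est A), etr q (Some (Br a)) q' ->
          abs_eq a q' b q'' -> etr q (Some (Br b)) q'')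
  /\ (forall q, exists s : seq (name * est A), forall a q',
          etr q (Some (Pl a)) q' -> List.In (a, q') s)
  /\ (forall q, exists s : seq (est A), forall q',
          etr q None q' -> List.In q' s)
  /\ (forall q, exists s : seq (name * est A), forall a q',
          etr q (Some (Br a)) q' ->
          exists b q'', List.In (b, q'') s /\ abs_eq a q' b q'')
  /\ (forall q : est A, efin q = Ftop ->
          (forall a, ~ in_supp q a) /\ forall l q', ~ etr q l q').

Definition eps_free (A : ernna) := forall q q' : est A, ~ etr q None q'.

Definition degree (A : ernna) (k : nat) :=
  (forall q : est A, exists2 m, m <= k & supp_card q m) /\
  (exists q : est A, supp_card q k).

Inductive reach (A : ernna) : est A -> word -> est A -> Prop :=
| reach_nil q : reach q [::] q
| reach_eps q q' w q'' : etr q None q' -> reach q' w q'' -> reach q w q''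
| reach_let q l q' w q'' : etr q (Some l) q' -> reach q' w q'' -> reach q (l :: w) q''.

Definition Lpre (A : ernna) (w : word) (v : fval) :=
  (v = F1 \/ v = Ftop) /\ exists q, reach (estart A) w q /\ efin q = v.

Definition L0 (A : ernna) (w : word) :=
  closed_word w /\
  (Lpre A w F1 \/ exists v u, w = v ++ u /\ Lpre A v Ftop).

(* L_alpha(A) = L0(A)/alpha, represented by the union of its classes *)
Definition Lalpha (A : ernna) (w : word) := exists2 w', L0 A w' & aeq w' w.

Section NameDrop.
Variable A : ernna.
Local Notation Q := (est A).

Definition is_restr (X : Q -> Prop) :=
  exists (q : Q) (N : name -> Prop),
    (forall a, N a -> in_supp q a) /\ X = restr q N.

Definition ndcar := {X : Q -> Prop | is_restr X}.

Lemma is_restr_img p X : is_restr X -> is_restr (imgset p X).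
Proof.
case=> q [N [HN ->]]; exists (nact p q), (fun a => N (pinv p a)); split.
  by move=> a Na; apply: in_supp_act; exact: HN.
exact: img_restr.
Qed.

Definition ndact (p : fperm) (X : ndcar) : ndcar :=
  exist _ (imgset p (proj1_sig X)) (is_restr_img p (proj2_sig X)).

Lemma ndeq (X Y : ndcar) : proj1_sig X = proj1_sig Y -> X = Y.
Proof.
case: X Y => [x px] [y py] /= e; subst; f_equal; exact: proof_irrelevance.
Qed.

Lemma setext (S T : Q -> Prop) : (forall y, S y <-> T y) -> S = T.
Proof.
move=> H; apply: functional_extensionality => y.
exact: propositional_extensionality.
Qed.

Lemma ndact_id X : ndact fperm_id X = X.
Proof.
apply: ndeq; apply: setext => y /=; split; first by case=> x Hx ->; rewrite nact_id.
by move=> Hy; exists y => //; rewrite nact_id.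
Qed.

Lemma ndact_comp p q X : ndact (fperm_comp p q) X = ndact p (ndact q X).
Proof.
apply: ndeq; apply: setext => y /=; split.
  by case=> x Hx ->; exists (nact q x); [exists x|]; rewrite ?nact_comp.
by case=> z [x Hx ->] ->; exists x; rewrite ?nact_comp.
Qed.

Lemma ndact_ext (p q : fperm) : pf p =1 pf q -> forall X, ndact p X = ndact q X.
Proof.
move=> E X; apply: ndeq; apply: setext => y /=.
by split; case=> x Hx ->; exists x; rewrite // (nact_ext E).
Qed.

Definition ndnom : nomType := NomType ndact_id ndact_comp ndact_ext.

Definition is_rep (X : ndcar) (q : Q) (N : name -> Prop) :=
  (forall a, N a -> in_supp q a) /\ proj1_sig X = restr q N.

Lemma ndstart_restr : is_restr (restr (estart A) (in_supp (estart A))).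
Proof. by exists (estart A), (in_supp (estart A)). Qed.

Definition ndstart : ndcar := exist _ _ ndstart_restr.

Lemma ndcar_nonempty (X : ndcar) : exists x, proj1_sig X x.
Proof.
case: X => S [q [N [_ E]]] /=; rewrite E; exists q, fperm_id => //.
by rewrite nact_id.
Qed.

(* f'(q|_N) = f(q)  (well defined since f is equivariant) *)
Definition ndfin (X : ndcar) : fval :=
  efin (proj1_sig (constructive_indefinite_description _ (ndcar_nonempty X))).

Definition ndtr (X : ndnom) (l : option blet) (Y : ndnom) : Prop :=
  match l with
  | None => False
  | Some (false, a) =>
      exists q N q' N',
        [/\ is_rep X q N, is_rep Y q' N', etr q (Some (Pl a)) q',
            (forall c, N' c -> N c) & N a]
  | Some (true, a) =>
      exists q N q' N' b q'' N'' (Z : ndnom),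
        [/\ is_rep X q N, is_rep Y q' N', etr q (Some (Br b)) q'',
            (forall c, N'' c -> in_supp q'' c /\ (N c \/ c = b)) &
            is_rep Z q'' N'' /\ abs_eq a Y b Z]
  end.

Definition nd : ernna := @Ernna ndnom ndtr ndstart ndfin.

End NameDrop.

(* A run of A through q is simulated in nd(A) through q|_supp(q): plain
   transitions only read and keep names of the support, and bar transitions
   only add the bound name.  Conversely, the members of a class q|_N differ by
   permutations fixing N, which transport transitions, so a run of nd(A) lifts
   to A along any word whose binders are fresh, a lifted bar transition being
   alpha-renamed to bind the fresh name.  Every word is alpha-equivalent to such
   a word, so it remains to see that L0(nd A) is alpha-closed: to rebind a as b
   in w|av, where b does not occur in v, forget b in the classes along the run
   of v; the classes reached by |a and by |b are then alpha-equivalent.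
   Finally q|_N is determined by the orbit of q and the subset N of its at most
   k support names, which gives degree k and at most n 2^k orbits. *)

From Stdlib Require Import FunctionalExtensionality PropExtensionality
  IndefiniteDescription Classical Relation_Operators.
From mathcomp Require Import all_boot zify.

Set Implicit Arguments.
Unset Strict Implicit.
Unset Printing Implicit Defensive.

(** * Fresh names and transpositions *)

Definition fresh (s : seq name) : name := (sumn s).+1.

Lemma fresh_notin s : fresh s \notin s.
Proof.
have le_sumn x : x \in s -> x <= sumn s.
  elim: s => //= y s IH; rewrite inE => /orP[/eqP->|/IH]; first exact: leq_addr.
  by move/leq_trans; apply; apply: leq_addl.
by apply/negP => /le_sumn; rewrite ltnn.
Qed.

Definition cofinite (P : name -> Prop) := exists L : seq name, forall d : name, d \notin L -> P d.

Lemma cofinite_ex P : cofinite P -> exists d, P d.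
Proof. by case=> L HL; exists (fresh L); apply/HL/fresh_notin. Qed.

Lemma cofiniteI P R : cofinite P -> cofinite R -> cofinite (fun d => P d /\ R d).
Proof.
case=> L1 H1 [L2 H2]; exists (L1 ++ L2) => d; rewrite mem_cat negb_or.
by case/andP=> /H1 ? /H2.
Qed.

Lemma cofinite_notin (L : seq name) : cofinite (fun d => d \notin L).
Proof. by exists L. Qed.

Lemma cofinite_neq a : cofinite (fun d => d <> a).
Proof. by exists [:: a] => d; rewrite inE => /eqP. Qed.

Lemma ex_pred_on (P : name -> Prop) (s : seq name) :
  exists f : pred name, {in s, forall a, f a <-> P a}.
Proof.
elim: s => [|x s [f Hf]]; first by exists pred0.
have [Px|nPx] := classic (P x);
  [exists (fun a => (a == x) || f a) | exists (fun a => (a != x) && f a)] => a;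
  rewrite inE /=; have [->|ax] //= := a =P x; apply: Hf.
Qed.


Lemma fperm_swapE a b x : fperm_swap a b x = sw a b x. Proof. by []. Qed.
Lemma fperm_swapVE a b x : pinv (fperm_swap a b) x = sw a b x. Proof. by []. Qed.

Ltac swap_cases :=
  rewrite /= ?fperm_swapE ?fperm_swapVE /sw ?eqxx;
  repeat match goal with
  | |- context [?x == ?y] => case: (x =P y) => ?
  | H : context [?x == ?y] |- _ => revert H
  end; intros; try congruence.

Lemma sw_id a b x : x <> a -> x <> b -> sw a b x = x.
Proof. by rewrite /sw => /eqP/negbTE-> /eqP/negbTE->. Qed.

Lemma sw_conj (p : fperm) a c z : sw (p a) (p c) (p z) = p (sw a c z).
Proof. by rewrite /sw !(inj_eq (can_inj (pfK p))); case: (z == a); case: (z == c). Qed.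

(** * Nominal sets and abstraction *)

Section Nominal.
Variable X : nomType.
Implicit Types (x y z : X) (p : fperm).

Lemma nactK p x : nact (fperm_inv p) (nact p x) = x.
Proof. by rewrite -nact_comp -[RHS]nact_id; apply: nact_ext => a /=; rewrite pfK. Qed.

Lemma nactVK p x : nact p (nact (fperm_inv p) x) = x.
Proof. by rewrite -nact_comp -[RHS]nact_id; apply: nact_ext => a /=; rewrite pinvK. Qed.

Lemma nact_swapK a b x : nact (fperm_swap a b) (nact (fperm_swap a b) x) = x.
Proof. by rewrite -nact_comp -[RHS]nact_id; apply: nact_ext => c /=; rewrite swK. Qed.

Lemma nact_swap_conj p a c x :
  nact (fperm_swap (p a) (p c)) (nact p x) = nact p (nact (fperm_swap a c) x).
Proof. by rewrite -!nact_comp; apply: nact_ext => z /=; apply: sw_conj. Qed.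

Lemma in_supp_nact p x a : in_supp (nact p x) (p a) <-> in_supp x a.
Proof.
split=> [|H]; last by apply: in_supp_act; rewrite pfK.
by move/(in_supp_act (p := fperm_inv p)); rewrite nactK.
Qed.

Lemma in_supp_nactV p x a : in_supp (nact p x) a <-> in_supp x (pinv p a).
Proof. by rewrite -{1}(pinvK p a) in_supp_nact. Qed.

Lemma supports_nact_eq x s p q :
  supports x s -> {in s, pf p =1 pf q} -> nact p x = nact q x.
Proof.
move=> Hs E; have fix_x : nact (fperm_comp (fperm_inv q) p) x = x.
  by apply: Hs => a /E /= ->; rewrite pfK.
by rewrite -(nactVK q (nact p x)) -[nact (fperm_inv q) _]nact_comp fix_x.
Qed.

Definition supp_seq x s := supports x s /\ forall a, in_supp x a <-> a \in s.
Definition nominal_elt x := exists s, supp_seq x s.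

Lemma least_supp_seq x s : least_supp x s -> supp_seq x s.
Proof.
by case=> Hs Hmin; split=> // a; split=> [/(_ s Hs)|a_s t /Hmin]; last apply.
Qed.

Lemma nominal_elt_nact p x : nominal_elt x -> nominal_elt (nact p x).
Proof.
case=> s [Hs Es]; exists (map p s); split=> [q Hq|a].
  have fix_x : nact (fperm_comp (fperm_inv p) (fperm_comp q p)) x = x.
    by apply: Hs => a a_s /=; rewrite Hq ?pfK ?map_f.
  by rewrite -[in RHS]fix_x !nact_comp nactVK.
rewrite in_supp_nactV Es; split=> [|/mapP[b b_s ->]]; last by rewrite pfK.
by move=> H; rewrite -(pinvK p a) map_f.
Qed.

Lemma cofinite_fresh x : nominal_elt x -> cofinite (fun d => ~ in_supp x d).
Proof. by case=> s [_ Es]; exists s => d /negP d_s; rewrite Es. Qed.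

(* If [a] is not in the support, swapping it with a fresh name fixes [x] and
   so produces a member of [S] outside [T]. *)
Lemma stable_names_in_supp x (S : name -> Prop) (T : seq name) :
  nominal_elt x -> (forall a, S a -> a \in T) ->
  (forall p, nact p x = x -> forall a, S a -> S (p a)) ->
  forall a, S a -> in_supp x a.
Proof.
move=> nx ST Sstab a Sa; apply: NNPP => a_x.
have [e [[eT e_x] ea]] :=
  cofinite_ex (cofiniteI (cofiniteI (cofinite_notin T) (cofinite_fresh nx)) (cofinite_neq a)).
case: nx => s [Hs Es].
have fix_x : nact (fperm_swap a e) x = x.
  apply: Hs => c; rewrite -Es => c_x.
  have [ca ce] : c <> a /\ c <> e by split=> E; subst.
  swap_cases.
have := ST _ (Sstab _ fix_x a Sa); rewrite fperm_swapE /sw eqxx.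
by rewrite (negbTE eT).
Qed.

Lemma abs_eq_sym a x b y : abs_eq a x b y -> abs_eq b y a x.
Proof. by case=> c [? ? ?]; exists c. Qed.

Lemma abs_eq_nact p a x b y :
  abs_eq a x b y -> abs_eq (p a) (nact p x) (p b) (nact p y).
Proof.
have p_inj := can_inj (pfK p).
case=> c [[ca cx] [cb cy] E]; exists (p c); split.
- by split=> [/p_inj|/in_supp_nact].
- by split=> [/p_inj|/in_supp_nact].
- by rewrite !nact_swap_conj E.
Qed.

Lemma abs_eq_fresh a x b y : nominal_elt x -> nominal_elt y -> abs_eq a x b y ->
  forall c, c <> a -> c <> b -> ~ in_supp x c -> ~ in_supp y c ->
  nact (fperm_swap a c) x = nact (fperm_swap b c) y.
Proof.
move=> [sx [Hx Ex]] [sy [Hy Ey]] [c0 [[c0a c0x] [c0b c0y] E]] c ca cb cx cy.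
have [->|cc0] := c =P c0; first exact: E.
have via_c0 d z s : supports z s -> (forall a, in_supp z a <-> a \in s) ->
    ~ in_supp z c0 -> ~ in_supp z c -> c0 <> d -> c <> d ->
    nact (fperm_swap d c) z = nact (fperm_swap c c0) (nact (fperm_swap d c0) z).
  move=> Hs Es z0 zc c0d cd; rewrite -nact_comp; apply: (supports_nact_eq Hs) => t.
  rewrite -Es => tz; have [tc0 tc] : t <> c0 /\ t <> c by split=> e; subst.
  swap_cases.
by rewrite (via_c0 a x sx) // (via_c0 b y sy) // E.
Qed.

Lemma abs_eq_trans a x b y c z : nominal_elt x -> nominal_elt y -> nominal_elt z ->
  abs_eq a x b y -> abs_eq b y c z -> abs_eq a x c z.
Proof.
move=> nx ny nz Hxy Hyz.
have [d [[[da db] dc] [[dx dy] dz]]] := cofinite_ex (cofiniteI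
  (cofiniteI (cofiniteI (cofinite_neq a) (cofinite_neq b)) (cofinite_neq c))
  (cofiniteI (cofiniteI (cofinite_fresh nx) (cofinite_fresh ny)) (cofinite_fresh nz))).
exists d; split=> //.
by rewrite (abs_eq_fresh nx ny Hxy) // (abs_eq_fresh ny nz Hyz).
Qed.

Lemma abs_eq_refl a x : nominal_elt x -> abs_eq a x a x.
Proof.
move=> nx; have [c [ca cx]] := cofinite_ex (cofiniteI (cofinite_neq a) (cofinite_fresh nx)).
by exists c.
Qed.

Lemma abs_eq_swap a x b : nominal_elt x -> (a = b \/ ~ in_supp x b) ->
  abs_eq a x b (nact (fperm_swap a b) x).
Proof.
move=> nx Hb; have nx' := nominal_elt_nact (fperm_swap a b) nx.
have [c [[[ca cb] cx] cx']] := cofinite_ex (cofiniteI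
  (cofiniteI (cofiniteI (cofinite_neq a) (cofinite_neq b)) (cofinite_fresh nx))
  (cofinite_fresh nx')).
exists c; split=> //; case: nx => s [Hs Es].
rewrite -nact_comp; apply: (supports_nact_eq Hs) => t; rewrite -Es => tx.
have tc : t <> c by move=> e; subst.
have [<-|ab] := a =P b; first by swap_cases.
have tb : t <> b by case: Hb => // bx e; subst.
swap_cases.
Qed.

Lemma restr_ext x (N M : name -> Prop) : (forall a, N a <-> M a) -> restr x N = restr x M.
Proof.
move=> NM; apply: functional_extensionality => y; apply: propositional_extensionality.
by split=> -[p Hp ->]; exists p => // a /NM /Hp.
Qed.

Lemma restr_mem x N : restr x N x.
Proof. by exists fperm_id; rewrite ?nact_id. Qed.

Lemma restr_nact x N s : fixes s N -> restr (nact s x) N = restr x N.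
Proof.
move=> Hs; apply: functional_extensionality => y; apply: propositional_extensionality.
split=> -[t Ht ->].
  by exists (fperm_comp t s); rewrite ?nact_comp // => a Na /=; rewrite Hs ?Ht.
exists (fperm_comp t (fperm_inv s)); last by rewrite nact_comp nactK.
by move=> a Na /=; rewrite -{1}(Hs a Na) pfK Ht.
Qed.

End Nominal.

(** * Bar strings and alpha-equivalence *)

Definition names (w : word) : seq name := map snd w.

Lemma names_wact p w : names (wact p w) = map p (names w).
Proof. by rewrite /names /wact -!map_comp. Qed.

Lemma wact_eq_on_names (p q : fperm) w : {in names w, pf p =1 pf q} -> wact p w = wact q w.
Proof.
elim: w => //= -[c d] w IH E; rewrite /bact /= E ?inE ?eqxx // IH // => z zw.
by apply: E; rewrite inE zw orbT.
Qed.

Lemma wact_swap_id a w : wact (fperm_swap a a) w = w.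
Proof. by rewrite -[RHS]wact_id; apply: wact_eq_on_names => z _; swap_cases. Qed.

Lemma supp_seq_names w : supp_seq (X := wnom) w (names w).
Proof.
have Hs : supports (X := wnom) w (names w).
  by move=> p Hp /=; rewrite -[RHS]wact_id; apply: wact_eq_on_names => z /Hp.
split=> // a; split=> [/(_ _ Hs)//|aw t Ht]; apply: NNPP => /negP at'.
have [e [et ew]] := cofinite_ex (cofiniteI (cofinite_notin t) (cofinite_notin (names w))).
have fix_w : wact (fperm_swap a e) w = w.
  apply: (Ht (fperm_swap a e)) => z zt.
  have [za ze] : z <> a /\ z <> e by split=> E; subst; rewrite zt in at' et.
  swap_cases.
have : fperm_swap a e a \in names (wact (fperm_swap a e) w) by rewrite names_wact map_f.
by rewrite fix_w fperm_swapE /sw eqxx (negbTE ew).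
Qed.

Lemma in_supp_word w a : in_supp (X := wnom) w a <-> a \in names w.
Proof. exact: (proj2 (supp_seq_names w)). Qed.

Lemma nominal_word w : nominal_elt (X := wnom) w.
Proof. by exists (names w); apply: supp_seq_names. Qed.

Lemma abs_eq_word a v b u : abs_eq (X := wnom) a v b u ->
  u = wact (fperm_swap a b) v /\ (a <> b -> b \notin names v).
Proof.
case=> c [[ca /in_supp_word/negP cv] [cb /in_supp_word/negP cu] E].
have b_fresh : a <> b -> b \notin names v.
  move=> ab; apply/negP => bv.
  have : fperm_swap a c b \in names (wact (fperm_swap a c) v) by rewrite names_wact map_f.
  rewrite [wact _ v]E names_wact => /mapP[z zu ez].
  have zc : z = c by move: ez; swap_cases.
  by move: cu; rewrite -zc zu.
split=> //; have {}E : u = wact (fperm_swap b c) (wact (fperm_swap a c) v).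
  by rewrite [wact _ v]E -wact_comp -[LHS]wact_id; apply: wact_ext => z /=; rewrite swK.
rewrite E -wact_comp; apply: wact_eq_on_names => z zv.
have zc : z <> c by move=> e; subst; rewrite zv in cv.
have [<-|ab] := a =P b; first by swap_cases.
have zb : z <> b by move=> e; subst; move: (b_fresh ab); rewrite zv.
swap_cases.
Qed.

Fixpoint freeb (w : word) (a : name) : bool :=
  if w is (bar, x) :: w' then
    if bar then (x != a) && freeb w' a else (x == a) || freeb w' a
  else false.

Lemma freeP w a : fn w a <-> freeb w a.
Proof.
split.
  case=> w1 [w2 [-> w1a]]; elim: w1 w1a => /= [|[[] x] w1 IH]; first by rewrite eqxx.
    by rewrite inE negb_or => /andP[xa /IH ->]; rewrite andbT; apply: contra xa => /eqP->.
  by rewrite inE negb_or => /andP[_ /IH ->]; rewrite orbT.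
elim: w => //= -[[] x] w IH.
  case/andP=> xa /IH[w1 [w2 [-> w1a]]]; exists (Br x :: w1), w2; split=> //.
  by rewrite inE negb_or w1a andbT; apply: contra xa => /eqP[->].
case/orP=> [/eqP->|/IH[w1 [w2 [-> w1a]]]]; first by exists [::], w.
by exists (Pl x :: w1), w2.
Qed.

Lemma closed_wordP w : closed_word w <-> forall a, ~~ freeb w a.
Proof. by split=> H a; [apply/negP => /freeP /H | move/freeP; apply/negP]. Qed.

Lemma freeb_cat w t a : freeb (w ++ t) a = freeb w a || (Br a \notin w) && freeb t a.
Proof.
elim: w => //= -[[] x] w ->; rewrite inE; last by rewrite orbA.
rewrite -pair_eqE /= [a == x]eq_sym.
by case: (x == a); case: (Br a \in w).
Qed.

Lemma freeb_names w a : freeb w a -> a \in names w.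
Proof.
elim: w => //= -[[] x] w IH; rewrite inE; first by case/andP=> _ /IH ->; rewrite orbT.
by case/orP=> [/eqP->|/IH->]; rewrite ?eqxx ?orbT.
Qed.

Lemma freeb_wact (p : fperm) w a : freeb (wact p w) (p a) = freeb w a.
Proof. by elim: w => //= -[[] x] w IH; rewrite /bact /= IH (inj_eq (can_inj (pfK p))). Qed.

Lemma closed_word_astep w1 w2 : astep w1 w2 -> closed_word w1 -> closed_word w2.
Proof.
case=> w [a [v [b [u [-> -> /abs_eq_word[-> b_fresh]]]]]] /closed_wordP cl1.
apply/closed_wordP => x; move: (cl1 x); rewrite !freeb_cat !negb_or.
case/andP=> -> /=; case: (Br x \notin w) => //=.
have [<-|ab] := a =P b; first by rewrite wact_swap_id.
have [<-|xb] := x =P b; first by rewrite eqxx.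
rewrite -[x in freeb (wact _ _) x](pinvK (fperm_swap a b)) freeb_wact fperm_swapVE /sw.
rewrite (introF eqP xb) (introF eqP (nesym xb)) /=.
have [<-|xa] := x =P a; last by rewrite (introF eqP (nesym xa)).
by move=> _; apply: contra (b_fresh ab); apply: freeb_names.
Qed.

Lemma astep_sym w1 w2 : astep w1 w2 -> astep w2 w1.
Proof.
case=> w [a [v [b [u [-> -> H]]]]]; exists w, b, u, a, v; split=> //.
exact: abs_eq_sym.
Qed.

Fixpoint fresh_binders (seen : seq name) (w : word) : bool :=
  if w is (bar, x) :: w' then (~~ bar || (x \notin seen)) && fresh_binders (x :: seen) w'
  else true.

Lemma fresh_binders_catl seen v u : fresh_binders seen (v ++ u) -> fresh_binders seen v.
Proof. by elim: v seen => //= -[bar x] v IH seen /andP[-> /IH]. Qed.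

Lemma aeq_fresh_binders w pre seen :
  exists2 w', aeq (pre ++ w) (pre ++ w') & fresh_binders seen w'.
Proof.
elim: {w}(size w) {-2}w (leqnn (size w)) pre seen => [|n IH] [|[bar x] w] //= size_w pre seen;
  try by exists [::]; first exact: rst_refl.
case: bar.
  have [y [y_seen y_w]] :=
    cofinite_ex (cofiniteI (cofinite_notin seen) (cofinite_notin (names w))).
  have step : astep (pre ++ Br x :: w) (pre ++ Br y :: wact (fperm_swap x y) w).
    exists pre, x, w, y, (wact (fperm_swap x y) w); split=> //.
    by apply: abs_eq_swap; [apply: nominal_word | right; rewrite in_supp_word; apply/negP].
  have size_w' : size (wact (fperm_swap x y) w) <= n by rewrite size_map.
  have [w' aeq_w' fb_w'] := IH _ size_w' (rcons pre (Br y)) (y :: seen).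
  exists (Br y :: w'); last by rewrite /= y_seen.
  by apply: rst_trans (rst_step _ _ _ _ step) _; rewrite -!cat_rcons.
have [w' aeq_w' fb_w'] := IH _ size_w (rcons pre (Pl x)) (x :: seen).
by exists (Pl x :: w'); rewrite -?cat_rcons.
Qed.

(** * Runs and orbit counting *)

Section Runs.
Variable B : ernna.
Implicit Types (X Y Z : est B) (w : word).

Lemma reach_cat X w1 Z w2 Y : reach X w1 Z -> reach Z w2 Y -> reach X (w1 ++ w2) Y.
Proof.
elim=> //= [q q' w q'' t _ IH | q l q' w q'' t _ IH] /IH; first exact: reach_eps.
exact: reach_let.
Qed.

Lemma reach_cat_inv X w1 w2 Y : reach X (w1 ++ w2) Y -> exists Z, reach X w1 Z /\ reach Z w2 Y.
Proof.
move e: (w1 ++ w2) => w r; elim: r w1 e => [q|q q' w' q'' t _ IH|q l q' w' q'' t r IH] w1.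
- by case: w1 => //= ->; exists q; split; constructor.
- by move/IH=> [Z [r1 r2]]; exists Z; split=> //; apply: reach_eps r1.
case: w1 => [/= ->|l' w1 [-> /IH[Z [r1 r2]]]]; last by exists Z; split=> //; apply: reach_let r1.
by exists q; split; [constructor | apply: reach_let t r].
Qed.

Lemma reach_cons_inv X l w Y : eps_free B -> reach X (l :: w) Y ->
  exists Z, etr X (Some l) Z /\ reach Z w Y.
Proof.
move=> noeps; move e: (l :: w) => w' r; case: r e => // [q q' w'' q'' t|q l' q' w'' q'' t r].
  by case: (noeps _ _ t).
by case=> -> ->; exists q'.
Qed.

End Runs.

Section Orbits.
Variable X : nomType.
Implicit Types x y z : X.

Lemma same_orbit_sym x y : same_orbit x y -> same_orbit y x.
Proof. by case=> p <-; exists (fperm_inv p); rewrite nactK. Qed.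

Lemma same_orbit_trans x y z : same_orbit x y -> same_orbit y z -> same_orbit x z.
Proof. by case=> p <- [q <-]; exists (fperm_comp q p); rewrite nact_comp. Qed.

Lemma orbit_transversal (L : nat -> X) N : exists m (r : nat -> X), m <= N /\
  (forall i j, i < m -> j < m -> same_orbit (r i) (r j) -> i = j) /\
  (forall i, i < N -> exists2 j, j < m & same_orbit (r j) (L i)).
Proof.
elim: N => [|N [m [r [le_mN [r_inj r_cov]]]]]; first by exists 0, L.
have [[j jm jN]|LN_new] := classic (exists2 j, j < m & same_orbit (r j) (L N)).
  exists m, r; split; first exact: leqW.
  by split=> // i; rewrite ltnS leq_eqVlt => /orP[/eqP->|/r_cov]; first exists j.
exists m.+1, (fun j => if j == m then L N else r j); split=> //; split=> [i j|i].
  rewrite !ltnS [i <= m]leq_eqVlt [j <= m]leq_eqVlt => /orP[/eqP->|im] /orP[/eqP->|jm] //.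
  - by rewrite eqxx (ltn_eqF jm) => /same_orbit_sym ?; case: LN_new; exists j.
  - by rewrite eqxx (ltn_eqF im) => ?; case: LN_new; exists i.
  - by rewrite (ltn_eqF im) (ltn_eqF jm); apply: r_inj.
rewrite ltnS leq_eqVlt => /orP[/eqP->|/r_cov[j jm ?]].
  by exists m; rewrite ?eqxx //; exists fperm_id; rewrite nact_id.
by exists j; rewrite ?(ltn_eqF jm) // ltnW.
Qed.

Lemma has_orbits_cover (L : nat -> X) N :
  (forall x, exists2 i, i < N & same_orbit (L i) x) -> exists2 m, m <= N & has_orbits X m.
Proof.
move=> L_cov; have [m [r [le_mN [r_inj r_cov]]]] := orbit_transversal L N.
exists m => //; exists r; split=> // x.
have [i iN Lx] := L_cov x; have [j jm rL] := r_cov i iN.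
by exists j => //; apply: same_orbit_trans Lx.
Qed.

Lemma has_orbits_cover_pairs (L : nat -> nat -> X) N M :
  (forall x, exists i j, [/\ i < N, j < M & same_orbit (L i j) x]) ->
  exists2 m, m <= N * M & has_orbits X m.
Proof.
move=> L_cov; apply: (has_orbits_cover (L := fun k => L (k %/ M) (k %% M))) => x.
have [i [j [iN jM Lx]]] := L_cov x; exists (i * M + j); first by nia.
have M_gt0 : 0 < M by apply: leq_ltn_trans jM.
by rewrite divnMDl // modnMDl divn_small // modn_small // addn0.
Qed.

End Orbits.

Fixpoint powerseq (s : seq name) : seq (seq name) :=
  if s is x :: s' then map (cons x) (powerseq s') ++ powerseq s' else [:: [::]].

Lemma size_powerseq s : size (powerseq s) = 2 ^ size s.
Proof. by elim: s => //= x s IH; rewrite size_cat size_map IH expnS mul2n addnn. Qed.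

Lemma filter_powerseq (P : pred name) s : filter P s \in powerseq s.
Proof.
elim: s => [|x s IH] /=; first by rewrite inE.
by rewrite mem_cat; case: (P x); rewrite ?map_f ?IH ?orbT.
Qed.

Lemma In_map_fst (T : Type) (s : seq (name * T)) a x : List.In (a, x) s -> a \in map fst s.
Proof. by elim: s => //= -[b y] s IH [[-> _]|/IH]; rewrite inE ?eqxx // => ->; rewrite orbT. Qed.


(** * Supports along transitions *)

Section NameDropping.
Variable A : ernna.
Local Notation Q := (est A).
Hypothesis A_nominal : is_nominal Q.
Hypothesis etr_equiv :
  forall p (q : Q) l q', etr q l q' -> etr (nact p q) (lact p l) (nact p q').
Hypothesis plain_branching : forall q : Q, exists s : seq (name * Q),
  forall a q', etr q (Some (Pl a)) q' -> List.In (a, q') s.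
Hypothesis start_supp : forall a, ~ in_supp (estart A) a.
Hypothesis A_alpha : forall (q : Q) a q' b q'',
  etr q (Some (Br a)) q' -> abs_eq a q' b q'' -> etr q (Some (Br b)) q''.
Hypothesis bar_branching : forall q : Q, exists s : seq (name * Q),
  forall a q', etr q (Some (Br a)) q' -> exists b q'', List.In (b, q'') s /\ abs_eq a q' b q''.
Hypothesis efin_equiv : forall p (q : Q), efin (nact p q) = efin q.

Local Notation ND := (ndnom A).

Lemma nominal_state (q : Q) : nominal_elt q.
Proof. by have [s /least_supp_seq] := A_nominal q; exists s. Qed.

Lemma supp_of_list (s : seq (name * Q)) : exists T : seq name,
  forall b q, List.In (b, q) s -> forall y, in_supp q y -> y \in T.
Proof.
elim: s => [|[b q] s [T HT]]; first by exists [::].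
have [sq [_ Eq]] := nominal_state q.
exists (sq ++ T) => b' q' /= [[_ <-] y /Eq|/HT H y /H]; rewrite mem_cat => ->; rewrite ?orbT //.
Qed.

Lemma etr_plain_name (q q' : Q) a : etr q (Some (Pl a)) q' -> in_supp q a.
Proof.
have [s Hs] := plain_branching q; move=> tr.
apply: (@stable_names_in_supp _ q (fun a => exists q', etr q (Some (Pl a)) q') (map fst s)).
- exact: nominal_state.
- by move=> b [q'' /Hs]; apply: In_map_fst.
- by move=> p fix_q b [q'' /(etr_equiv p)]; rewrite fix_q; exists (nact p q'').
- by exists q'.
Qed.

Lemma etr_plain_supp (q q' : Q) a y : etr q (Some (Pl a)) q' -> in_supp q' y -> in_supp q y.
Proof.
have [s Hs] := plain_branching q; have [T HT] := supp_of_list s.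
move=> tr q'y; apply: (@stable_names_in_supp _ q
  (fun y => exists a q', etr q (Some (Pl a)) q' /\ in_supp q' y) T).
- exact: nominal_state.
- by move=> z [b [q'' [/Hs /HT H /H]]].
- move=> p fix_q z [b [q'' [/(etr_equiv p) tr' q''z]]].
  by exists (p b), (nact p q''); rewrite -fix_q in_supp_nact.
- by exists a, q'.
Qed.

(* Only finitely many bar transitions up to alpha-equivalence, and an
   alpha-variant of the target has the same support apart from the bound name. *)
Lemma etr_bar_supp (q q'' : Q) b y :
  etr q (Some (Br b)) q'' -> in_supp q'' y -> y <> b -> in_supp q y.
Proof.
have [s Hs] := bar_branching q; have [T HT] := supp_of_list s.
move=> tr q''y yb; apply: (@stable_names_in_supp _ q
  (fun y => exists b q'', [/\ etr q (Some (Br b)) q'', in_supp q'' y & y <> b]) (T ++ map fst s)).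
- exact: nominal_state.
- move=> z [b1 [q1 [/Hs[b2 [q2 [in_s [c [[cb1 cq1] [cb2 cq2] E]]]]] q1z zb1]]].
  rewrite mem_cat; have [->|zb2] := z =P b2; first by rewrite (In_map_fst in_s) orbT.
  have zc : z <> c by move=> e; subst.
  have : in_supp (nact (fperm_swap b1 c) q1) (fperm_swap b1 c z) by rewrite in_supp_nact.
  have fix1 : fperm_swap b1 c z = z by swap_cases.
  have fix2 : pinv (fperm_swap b2 c) z = z by swap_cases.
  by rewrite fix1 E in_supp_nactV fix2 => /(HT _ _ in_s) ->.
- move=> p fix_q z [b1 [q1 [/(etr_equiv p) tr' q1z zb1]]].
  exists (p b1), (nact p q1); rewrite -fix_q; split=> //; first exact/in_supp_nact.
  by move/(can_inj (pfK p)).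
- by exists b, q''.
Qed.


(** * The name-dropping automaton *)

(* [ndres q N] is q|_N; intersecting with supp q makes it meaningful for every N. *)
Definition ndres (q : Q) (N : name -> Prop) : ND.
Proof.
exists (restr q (fun a => N a /\ in_supp q a)).
by exists q, (fun a => N a /\ in_supp q a); split=> // a [].
Defined.

Lemma ndres_rep (q : Q) N : (forall a, N a -> in_supp q a) -> is_rep (ndres q N) q N.
Proof.
by move=> NS; split=> //=; apply: restr_ext => a; split=> [[]|Na] //; split=> //; apply: NS.
Qed.

Lemma rep_ndres (X : ND) q N : is_rep X q N -> X = ndres q N.
Proof. by case=> NS E; apply: ndeq; rewrite E; case: (ndres_rep NS). Qed.

Lemma ex_rep (X : ND) : exists q N, is_rep X q N.
Proof. by case: X => S [q [N [NS E]]]; exists q, N. Qed.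

Lemma ndres_ext (q : Q) (N M : name -> Prop) :
  (forall a, in_supp q a -> N a <-> M a) -> ndres q N = ndres q M.
Proof.
by move=> NM; apply: ndeq; apply: restr_ext => a; split=> -[Na qa]; split=> //; apply/(NM a qa).
Qed.

Lemma ndres_act p (q : Q) N : @nact ND p (ndres q N) = ndres (nact p q) (fun a => N (pinv p a)).
Proof. by apply: ndeq; rewrite /= img_restr; apply: restr_ext => a; rewrite in_supp_nactV. Qed.

Lemma ndres_act_fix (q : Q) N s : (forall a, N a -> in_supp q a) -> fixes s N ->
  ndres (nact s q) N = ndres q N.
Proof.
move=> NS Hs; have NS' a : N a -> in_supp (nact s q) a.
  by move=> Na; rewrite -(Hs a Na) in_supp_nact; apply: NS.
by apply: ndeq; rewrite (proj2 (ndres_rep NS)) (proj2 (ndres_rep NS')) restr_nact.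
Qed.

Lemma supports_ndres (q : Q) N t :
  (forall a, N a -> in_supp q a -> a \in t) -> supports (X := ND) (ndres q N) t.
Proof.
move=> Nt p Hp; apply: ndeq; rewrite /= img_restr.
set M := fun a => N a /\ in_supp q a.
have HpM a : M a -> p a = a by case=> Na qa; apply/Hp/Nt.
rewrite -[RHS](restr_nact _ HpM); apply: restr_ext => a; split=> [Ma'|Ma].
  by move: (HpM _ Ma'); rewrite pinvK => ->.
by suff -> : pinv p a = a; rewrite // -{1}(HpM _ Ma) pfK.
Qed.

Lemma ndres_member_supp (q y : Q) N a :
  proj1_sig (ndres q N) y -> N a -> in_supp q a -> in_supp y a.
Proof. by case=> s Hs -> Na qa; rewrite -(Hs a (conj Na qa)) in_supp_nact. Qed.

Lemma in_supp_ndres (q : Q) N a : in_supp (X := ND) (ndres q N) a <-> N a /\ in_supp q a.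
Proof.
have [sq [_ Eq]] := nominal_state q.
split=> [|[Na qa] t Ht].
  have [f Hf] := ex_pred_on N sq.
  have t_supp : supports (X := ND) (ndres q N) [seq b <- sq | f b].
    by apply: supports_ndres => b Nb /Eq b_sq; rewrite mem_filter b_sq andbT; apply/(Hf b b_sq).
  move/(_ _ t_supp); rewrite mem_filter => /andP[fa a_sq].
  by split; [apply/(Hf a a_sq) | apply/Eq].
apply: NNPP => /negP a_t.
have [e [et eq]] := cofinite_ex (cofiniteI (cofinite_notin t) (cofinite_fresh (nominal_state q))).
have fix_ndres : ndact (fperm_swap a e) (ndres q N) = ndres q N.
  apply: Ht => z zt; have [za ze] : z <> a /\ z <> e by split=> E; subst; rewrite zt in a_t et.
  swap_cases.
have : proj1_sig (ndact (fperm_swap a e) (ndres q N)) (nact (fperm_swap a e) q).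
  by exists q => //; apply: restr_mem.
rewrite fix_ndres => /ndres_member_supp/(_ Na qa); rewrite in_supp_nactV fperm_swapVE /sw eqxx.
by move/eq.
Qed.

Lemma nominal_nd (X : ND) : nominal_elt X.
Proof.
have [q [N /rep_ndres->]] := ex_rep X; have [sq [_ Eq]] := nominal_state q.
have [f Hf] := ex_pred_on N sq; exists [seq b <- sq | f b]; split=> [|a].
  by apply: supports_ndres => b Nb /Eq b_sq; rewrite mem_filter b_sq andbT; apply/(Hf b b_sq).
rewrite in_supp_ndres mem_filter Eq; split=> [[Na a_sq]|/andP[fa a_sq]].
  by rewrite a_sq andbT; apply/(Hf a a_sq).
by split=> //; apply/(Hf a a_sq).
Qed.

Lemma rep_uniq (X : ND) q N q1 N1 : is_rep X q N -> is_rep X q1 N1 ->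
  (forall a, N a <-> N1 a) /\ exists2 s, fixes s N & q1 = nact s q.
Proof.
move=> rep rep1; split=> [a|].
  have := in_supp_ndres q N a; rewrite -(rep_ndres rep) (rep_ndres rep1) in_supp_ndres => E.
  case: rep rep1 => [NS _] [NS1 _]; split=> Na.
    by case: (E.2 (conj Na (NS a Na))).
  by case: (E.1 (conj Na (NS1 a Na))).
by case: rep1 => _ E1; have := restr_mem q1 N1; rewrite -E1 (proj2 rep) => -[s]; exists s.
Qed.

Lemma ndres_eq_sub (q r : Q) N M P : ndres q N = ndres r M ->
  (forall a, N a -> in_supp q a) -> (forall a, M a -> in_supp r a) ->
  (forall a, P a -> N a) -> ndres q P = ndres r P.
Proof.
move=> E NS MS PN; have rep_q : is_rep (ndres r M) q N by rewrite -E; apply: ndres_rep.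
have [MN [s Hs ->]] := rep_uniq (ndres_rep MS) rep_q.
by apply: ndres_act_fix => a /PN /MN; [apply: MS | apply: Hs].
Qed.

Lemma ndfin_mem (X : ND) x : proj1_sig X x -> ndfin X = efin x.
Proof.
rewrite /ndfin; case: constructive_indefinite_description => y /=.
have [q [N [_ ->]]] := ex_rep X.
by case=> s _ -> [t _ ->]; rewrite !efin_equiv.
Qed.

Lemma ndfin_ndres (q : Q) N : ndfin (ndres q N) = efin q.
Proof. exact/ndfin_mem/restr_mem. Qed.

Lemma ndfin_act p (X : ND) : ndfin (ndact p X) = ndfin X.
Proof.
have [x Xx] := ndcar_nonempty X.
by rewrite (ndfin_mem Xx) (@ndfin_mem _ (nact p x)) ?efin_equiv //; exists x.
Qed.

Lemma rep_act p (X : ND) q N : is_rep X q N ->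
  is_rep (ndact p X) (nact p q) (fun a => N (pinv p a)).
Proof.
case=> NS E; split=> [a /NS|]; first by rewrite in_supp_nactV.
by rewrite /= E img_restr.
Qed.

Lemma ndtr_act p (X Y : ND) l : ndtr X l Y -> ndtr (ndact p X) (lact p l) (ndact p Y).
Proof.
case: l => [[[] a]|] //=.
  case=> q [N [q' [N' [b [q'' [N'' [Z [repX repY tr N''S [repZ abs]]]]]]]]].
  exists (nact p q), (fun a => N (pinv p a)), (nact p q'), (fun a => N' (pinv p a)), (p b),
    (nact p q''), (fun a => N'' (pinv p a)), (ndact p Z).
  split; try exact: rep_act; first exact: (etr_equiv p tr).
    move=> c /N''S[q''c Nc]; split; first by rewrite in_supp_nactV.
    by case: Nc => [|<-]; [left | right; rewrite pinvK].
  by split; [apply: rep_act | apply: abs_eq_nact].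
case=> q [N [q' [N' [repX repY tr N'N Na]]]].
exists (nact p q), (fun a => N (pinv p a)), (nact p q'), (fun a => N' (pinv p a)).
by split; try exact: rep_act; [apply: (etr_equiv p tr) | move=> c /N'N | rewrite pfK].
Qed.

Lemma nd_eps_free : eps_free (nd A).
Proof. by move=> X Y []. Qed.

Lemma reach_act p (X : ND) w Y :
  reach (A := nd A) X w Y -> reach (A := nd A) (ndact p X) (wact p w) (ndact p Y).
Proof.
elim=> [q|q q' w' q'' []|q l q' w' q'' t _ IH] /=; first exact: reach_nil.
by apply: reach_let IH; apply: (ndtr_act p t).
Qed.

Lemma ndtr_alpha (X Y Y' : ND) a b :
  ndtr X (Some (Br a)) Y -> abs_eq a Y b Y' -> ndtr X (Some (Br b)) Y'.
Proof.
case=> q [N [q' [N' [b0 [q'' [N'' [Z [repX _ tr N''S [repZ abs]]]]]]]]] Y_Y'.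
have [q2 [N2 repY']] := ex_rep Y'.
exists q, N, q2, N2, b0, q'', N'', Z; split=> //; split=> //.
by apply: abs_eq_trans (abs_eq_sym Y_Y') abs; apply: nominal_nd.
Qed.

Lemma ndtr_of_etr (q q' : Q) l :
  etr q (Some l) q' -> ndtr (ndres q (in_supp q)) (Some l) (ndres q' (in_supp q')).
Proof.
have rep (r : Q) : is_rep (ndres r (in_supp r)) r (in_supp r) by apply: ndres_rep.
case: l => -[] a tr /=.
  exists q, (in_supp q), q', (in_supp q'), a, q', (in_supp q'), (ndres q' (in_supp q')).
  split=> //; last by split=> //; apply/abs_eq_refl/nominal_nd.
  move=> c q'c; split=> //; have [->|ca] := c =P a; [by right | left].
  exact: etr_bar_supp tr q'c ca.
exists q, (in_supp q), q', (in_supp q'); split=> //.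
- by move=> c; apply: etr_plain_supp tr.
- exact: etr_plain_name tr.
Qed.

Lemma nd_reach_of_reach (q q' : Q) w : eps_free A -> reach q w q' ->
  reach (A := nd A) (ndres q (in_supp q)) w (ndres q' (in_supp q')).
Proof.
move=> noeps; elim=> [r|r r' w' r'' /noeps[]|r l r' w' r'' tr _ IH]; first exact: reach_nil.
by apply: reach_let IH; apply: ndtr_of_etr.
Qed.

Lemma mem_ndact_swap a b (W : ND) x :
  proj1_sig W (nact (fperm_swap a b) x) -> proj1_sig (ndact (fperm_swap a b) W) x.
Proof. by move=> Wx; exists (nact (fperm_swap a b) x); rewrite ?nact_swapK. Qed.

Lemma ndtr_plain_lift (X Y : ND) a p : ndtr X (Some (Pl a)) Y -> proj1_sig X p ->
  exists2 p', etr p (Some (Pl a)) p' & proj1_sig Y p'.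
Proof.
case=> q [N [q' [N' [[_ ->] [_ EY] tr N'N Na]]]] [s Hs ->].
exists (nact s q'); first by have := etr_equiv s tr; rewrite /= /bact /= Hs.
by rewrite EY; exists s => // c /N'N /Hs.
Qed.

(* With p = s q, the lifted target is the renaming of s q'' that binds [a]
   instead of [s b]. *)
Lemma ndtr_bar_lift (X Y : ND) a p : ndtr X (Some (Br a)) Y -> proj1_sig X p ->
  ~ in_supp p a -> exists2 p', etr p (Some (Br a)) p' & proj1_sig Y p'.
Proof.
case=> q [N [q' [N' [b [q'' [N'' [Z [[NS ->] _ tr N''S [repZ abs]]]]]]]]] [s Hs ->] a_p.
move Eb1: (s b) => b1.
have tr_r : etr (nact s q) (Some (Br b1)) (nact s q'') by rewrite -Eb1; apply: (etr_equiv s tr).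
have r_supp y : in_supp (nact s q'') y -> y = b1 \/ in_supp (nact s q) y.
  rewrite in_supp_nactV => q''y; have [e|ne] := pinv s y =P b.
    by left; rewrite -Eb1 -e pinvK.
  by right; rewrite in_supp_nactV; apply: etr_bar_supp tr q''y ne.
exists (nact (fperm_swap b1 a) (nact s q'')).
  apply: (A_alpha tr_r); apply: abs_eq_swap; first exact: nominal_state.
  by have [->|ne] := b1 =P a; [left | right => /r_supp[/esym|]].
have [d [[da db] [dY dZ]]] := cofinite_ex (cofiniteI
  (cofiniteI (cofinite_neq a) (cofinite_neq b))
  (cofiniteI (cofinite_fresh (nominal_nd Y)) (cofinite_fresh (nominal_nd Z)))).
rewrite -(nact_swapK a d Y) (abs_eq_fresh (nominal_nd Y) (nominal_nd Z) abs) //.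
apply/mem_ndact_swap/mem_ndact_swap; rewrite (proj2 repZ) -!nact_comp.
eexists; last by reflexivity.
move=> y N''y /=; have yd : y <> d.
  move=> E; apply: dZ; rewrite -E (rep_ndres repZ) in_supp_ndres.
  by split; last case: (N''S y N''y).
have [->|yb] := y =P b; first by rewrite /= Eb1; swap_cases.
have Ny : N y by case: (N''S y N''y) => _ [].
have sy : s y = y := Hs y Ny.
have yb1 : y <> b1 by rewrite -Eb1 -sy => /(can_inj (pfK s)).
have ya : y <> a by move=> E; apply: a_p; rewrite -E -sy in_supp_nact; apply: NS.
by rewrite /= sy !sw_id.
Qed.

(* Binders fresh for [seen], which contains supp p, are what allow each lifted
   bar transition to be renamed so that it binds the name read by nd(A). *)
Lemma nd_reach_lift (X F : ND) w : reach (A := nd A) X w F ->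
  forall (p : Q) seen, proj1_sig X p -> (forall y, in_supp p y -> y \in seen) ->
  fresh_binders seen w -> exists p', reach p w p' /\ efin p' = ndfin F.
Proof.
elim=> [X0|X0 X1 w' F0 []|X0 [bar a] X1 w' F0 t _ IH] p seen Xp p_seen.
  by exists p; split; [apply: reach_nil | rewrite (ndfin_mem Xp)].
case/andP=> a_new fb; suff [p' tr [X1p' p'_seen]] : exists2 p', etr p (Some (bar, a)) p' &
    proj1_sig X1 p' /\ forall y, in_supp p' y -> y \in a :: seen.
  by have [p'' [r e]] := IH p' _ X1p' p'_seen fb; exists p''; split=> //; apply: reach_let tr r.
case: bar t a_new => t a_new.
  have a_p : ~ in_supp p a by move/p_seen; apply/negP.
  have [p' tr X1p'] := ndtr_bar_lift t Xp a_p; exists p' => //; split=> // y p'y.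
  by rewrite inE; have [//|ya] := y =P a; apply/p_seen/(etr_bar_supp tr p'y).
have [p' tr X1p'] := ndtr_plain_lift t Xp; exists p' => //; split=> // y /(etr_plain_supp tr).
by rewrite inE => /p_seen ->; rewrite orbT.
Qed.

(* If [x] is the name [b] bound on the right, it is not in the support on the
   left, so nothing needs to be dropped on the right. *)
Lemma abs_eq_ndres_drop a b x (q' q'' : Q) N' N'' :
  (forall y, N' y -> in_supp q' y) -> (forall y, N'' y -> in_supp q'' y) -> x <> a ->
  abs_eq a (ndres q' N') b (ndres q'' N'') ->
  abs_eq a (ndres q' (fun y => N' y /\ y <> x))
    b (ndres q'' (fun y => N'' y /\ (x <> b -> y <> x))).
Proof.
move=> N'S N''S xa abs; have [n' n''] := (nominal_nd (ndres q' N'), nominal_nd (ndres q'' N'')).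
have [d [[[da db] dx] [dY dZ]]] := cofinite_ex (cofiniteI
  (cofiniteI (cofiniteI (cofinite_neq a) (cofinite_neq b)) (cofinite_neq x))
  (cofiniteI (cofinite_fresh n') (cofinite_fresh n''))).
have E := abs_eq_fresh n' n'' abs da db dY dZ.
have [dN' dN''] : ~ N' d /\ ~ N'' d.
  by split=> [/[dup]/N'S|/[dup]/N''S] ? ?; [apply: dY | apply: dZ]; rewrite in_supp_ndres.
exists d; split; [split=> // /in_supp_ndres[[]] // .. | ].
rewrite !ndres_act /= in E *.
have HN' y : N' (sw a d y) -> in_supp (nact (fperm_swap a d) q') y.
  by move=> /N'S; rewrite in_supp_nactV.
have HN'' y : N'' (sw b d y) -> in_supp (nact (fperm_swap b d) q'') y.
  by move=> /N''S; rewrite in_supp_nactV.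
have [N'N'' _] := rep_uniq (ndres_rep HN'') (eq_ind _ (fun X => is_rep X _ _) (ndres_rep HN') _ E).
rewrite (ndres_eq_sub E HN' HN''); last by move=> y [].
apply: ndres_ext => y _.
have ya : N' (sw a d y) -> y <> a by move=> + ya_eq; rewrite ya_eq /sw eqxx.
have yb : N'' (sw b d y) -> y <> b by move=> + ya_eq; rewrite ya_eq /sw eqxx.
split=> -[Ny nx].
  have Ny'' := (N'N'' y).2 Ny; split=> // xb.
  by move: nx (ya Ny) (yb Ny''); swap_cases.
have Ny' := (N'N'' y).1 Ny; split=> //.
have [bx|/nesym/nx bdy] := b =P x; last by move: bdy (ya Ny') (yb Ny); swap_cases.
by subst x; move: xa (ya Ny') (yb Ny); swap_cases.
Qed.

Lemma rep_restrict (X : ND) q N q0 N0 M : is_rep X q N -> is_rep X q0 N0 ->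
  (forall y, M y -> N y) -> is_rep (ndres q M) q0 M.
Proof.
move=> rep rep0 MN; have [NN0 _] := rep_uniq rep rep0.
have [NS N0S] := (proj1 rep, proj1 rep0).
rewrite (ndres_eq_sub (M := N0) _ NS N0S MN); last by rewrite -(rep_ndres rep) -(rep_ndres rep0).
by apply: ndres_rep => y /MN /NN0 /N0S.
Qed.

Lemma ndtr_drop (Y Y' : ND) l x q N q' N' (M : name -> Prop) :
  ndtr Y (Some l) Y' -> is_rep Y q N -> is_rep Y' q' N' -> l.2 <> x ->
  (forall y, M y -> N y) -> (forall y, N y -> y <> x -> M y) ->
  ndtr (ndres q M) (Some l) (ndres q' (fun y => N' y /\ y <> x)).
Proof.
case: l => -[] c /= + repY repY' cx MN NM.
  case=> q0 [N0 [q0' [N0' [b [q'' [N'' [Z [rep0 rep0' tr N''S [repZ abs]]]]]]]]].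
  have [NN0 _] := rep_uniq repY rep0.
  pose N2 y := N'' y /\ (x <> b -> y <> x).
  exists q0, M, q', (fun y => N' y /\ y <> x), b, q'', N2, (ndres q'' N2); split.
  - exact: rep_restrict repY rep0 MN.
  - by apply: ndres_rep => y [/(proj1 repY')].
  - exact: tr.
  - move=> y [/N''S[q''y N0y_or_b] xy]; split=> //.
    have [->|yb] := y =P b; [by right | left].
    have yx : y <> x by have [xb|/xy //] := x =P b; rewrite -xb in yb.
    by case: N0y_or_b => // /NN0 Ny; apply: NM.
  split; first by apply: ndres_rep => y [/(proj1 repZ)].
  rewrite (rep_ndres repY') (rep_ndres repZ) in abs.
  by apply: abs_eq_ndres_drop (proj1 repY') (proj1 repZ) (nesym cx) abs.
case=> q0 [N0 [q0' [N0' [rep0 rep0' tr N0'N0 N0c]]]].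
have [NN0 _] := rep_uniq repY rep0; have [N'N0' _] := rep_uniq repY' rep0'.
exists q0, M, q0', (fun y => N' y /\ y <> x); split=> //.
- exact: rep_restrict repY rep0 MN.
- by apply: rep_restrict repY' rep0' _ => y [].
- by move=> y [/N'N0' /N0'N0 /NN0 Ny yx]; apply: NM.
- exact: NM _ ((NN0 c).2 N0c) cx.
Qed.

Lemma nd_reach_drop (Y F : ND) v : reach (A := nd A) Y v F ->
  forall q N x, is_rep Y q N -> x \notin names v ->
  exists F', reach (A := nd A) (ndres q (fun y => N y /\ y <> x)) v F' /\ ndfin F' = ndfin F.
Proof.
elim=> [Y0|Y0 Y1 v' F0 []|Y0 l Y1 v' F0 t _ IH] q N x repY.
  move=> _; exists (ndres q (fun y => N y /\ y <> x)); split; first exact: reach_nil.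
  by rewrite ndfin_ndres (ndfin_mem (x := q)) // (proj2 repY); apply: restr_mem.
rewrite /names /= inE negb_or => /andP[/eqP xl x_v'].
have [q' [N' repY1]] := ex_rep Y1.
have t' := ndtr_drop (M := fun y => N y /\ y <> x) t repY repY1 (nesym xl)
  (fun y => @proj1 _ _) (fun y Ny yx => conj Ny yx).
have [F' [r e]] := IH q' N' x repY1 x_v'.
by exists F'; split=> //; apply: reach_let r.
Qed.

(* To rebind [a] as [b], first forget [b] (it is fresh for the rest of the
   word, so the run survives), then rename. *)
Lemma nd_reach_rename (X F : ND) w a v b :
  reach (A := nd A) X (w ++ Br a :: v) F -> b \notin names v ->
  exists F', reach (A := nd A) X (w ++ Br b :: wact (fperm_swap a b) v) F' /\ ndfin F' = ndfin F.
Proof.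
move=> r b_v; have [<-|ab] := a =P b; first by exists F; rewrite wact_swap_id.
have [X1 [r1 /(reach_cons_inv nd_eps_free)[Y1 [t r2]]]] := reach_cat_inv r.
have [q1 [N1 repX1]] := ex_rep X1; have [q1' [N1' repY1]] := ex_rep Y1.
have t' := ndtr_drop (M := N1) t repX1 repY1 ab (fun y => id) (fun y Ny _ => Ny).
rewrite -(rep_ndres repX1) in t'.
have [F' [r3 e]] := nd_reach_drop r2 repY1 b_v.
set W := ndres q1' _ in t' r3.
have b_W : ~ in_supp W b by rewrite /W in_supp_ndres => -[[]].
have t2 := ndtr_alpha t' (abs_eq_swap (nominal_nd W) (or_intror b_W)).
exists (ndact (fperm_swap a b) F'); split; last by rewrite ndfin_act.
by apply: reach_cat r1 (@reach_let (nd A) _ _ _ _ _ t2 (reach_act _ r3)).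
Qed.

Lemma cat_eq_cat (T : Type) (w t v u : seq T) : w ++ t = v ++ u ->
  (exists x t1, v = w ++ x :: t1 /\ t = x :: t1 ++ u) \/ (exists w3, w = v ++ w3 /\ u = w3 ++ t).
Proof.
elim: w v => [|x w IH] [|y v] //=; try by right; exists [::].
- by move=> ->; left; exists y, v.
- by move=> <-; right; exists (x :: w).
by case=> -> /IH[[z [t1 [-> ->]]]|[w3 [-> ->]]]; [left; exists z, t1 | right; exists w3].
Qed.

Lemma L0_nd_astep w1 w2 : astep w1 w2 -> L0 (nd A) w1 -> L0 (nd A) w2.
Proof.
move=> st [cl1 L1]; split; first exact: closed_word_astep st cl1.
case: st => w [a [v [b [u [E1 -> /abs_eq_word[-> b_fresh]]]]]]; subst w1.
have [<-|/b_fresh b_v] := a =P b; first by rewrite wact_swap_id.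
case: L1 => [[_ [F [r e]]]|[v0 [u0 [E [top [F [r e]]]]]]].
  have [F' [r' e']] := nd_reach_rename r b_v.
  by left; split; [left | exists F'; rewrite /= e'].
right; case: (cat_eq_cat E) => [[l [v' [Ev0 [El Ev]]]]|[w3 [-> _]]]; last first.
  exists v0, (w3 ++ Br b :: wact (fperm_swap a b) v); rewrite -catA.
  by split=> //; split=> //; exists F.
subst v0 l v.
have b_v' : b \notin names v' by apply: contra b_v; rewrite /names map_cat mem_cat => ->.
have [F' [r' e']] := nd_reach_rename r b_v'.
exists (w ++ Br b :: wact (fperm_swap a b) v'), (wact (fperm_swap a b) u0).
by rewrite /wact map_cat -catA; split=> //; split=> //; exists F'; rewrite /= e'.
Qed.

Lemma L0_nd_aeq w w' : aeq w w' -> L0 (nd A) w <-> L0 (nd A) w'.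
Proof.
elim=> [x y st|x|x y _ IH|x y z _ IH1 _ IH2] //.
- by split; [apply: L0_nd_astep | apply/L0_nd_astep/astep_sym].
- by symmetry.
- by rewrite IH1.
Qed.

Lemma ndstartE : ndstart A = ndres (estart A) (in_supp (estart A)).
Proof. exact: rep_ndres. Qed.

Lemma L0_nd_of_L0 w : eps_free A -> L0 A w -> L0 (nd A) w.
Proof.
move=> noeps [cl L]; split=> //.
have lift v f : Lpre A v f -> Lpre (nd A) v f.
  case=> f_acc [q [r e]]; split=> //; exists (ndres q (in_supp q)).
  by rewrite /= ndstartE ndfin_ndres e; split=> //; apply: nd_reach_of_reach.
case: L => [/lift|[v [u [-> /lift]]]]; [left | right; exists v, u] => //.
Qed.

Lemma Lalpha_of_L0_nd w : L0 (nd A) w -> Lalpha A w.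
Proof.
have [w' /= aeq_w' fb] := aeq_fresh_binders w [::] [::].
move/(L0_nd_aeq aeq_w') => [cl L]; exists w'; last exact: rst_sym.
have s0 : proj1_sig (ndstart A) (estart A) by apply: restr_mem.
have s0_seen y : in_supp (estart A) y -> y \in [::] by move/start_supp.
split=> //; case: L => [[F1 [F [r e]]]|[v [u [Ew [top [F [r e]]]]]]].
  have [p' [r' e']] := nd_reach_lift r s0 s0_seen fb.
  by left; split=> //; exists p'; rewrite e'.
rewrite Ew in fb; have [p' [r' e']] := nd_reach_lift r s0 s0_seen (fresh_binders_catl fb).
by right; exists v, u; split=> //; split=> //; exists p'; rewrite e'.
Qed.

Lemma Lalpha_nd w : eps_free A -> Lalpha A w <-> Lalpha (nd A) w.
Proof.
move=> noeps; split=> [[w0 /(L0_nd_of_L0 noeps) L0w0 e]|[w0 /Lalpha_of_L0_nd[w1 L0w1 e1] e]].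
  by exists w0.
by exists w1 => //; apply: rst_trans e1 e.
Qed.

Lemma degree_nd k : degree A k -> degree (nd A) k.
Proof.
case=> deg_le [q0 [s0 [uniq_s0 size_s0 E0]]]; split=> [X|].
  have [q [N /rep_ndres->]] := ex_rep X; have [m m_k [s [uniq_s size_s Es]]] := deg_le q.
  have [f Hf] := ex_pred_on N s; exists (size [seq a <- s | f a]).
    by rewrite size_filter (leq_trans (count_size _ _)) // size_s.
  exists [seq a <- s | f a]; split=> // [|a]; first exact: filter_uniq.
  rewrite in_supp_ndres mem_filter Es.
  split=> [[Na a_s]|/andP[fa a_s]]; first by rewrite a_s andbT; apply/(Hf a a_s).
  by split=> //; apply/(Hf a a_s).
exists (ndres q0 (in_supp q0)), s0; split=> // a.
by rewrite in_supp_ndres -E0; split=> [[]|].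
Qed.

(* Every class lies in the orbit of some (rA i)|_S, with rA i an orbit
   representative of A and S one of the at most 2^k subsets of its support. *)
Lemma orbits_nd k n : degree A k -> has_orbits Q n ->
  exists2 m, m <= n * 2 ^ k & has_orbits ND m.
Proof.
case=> deg_le _ [rA [_ rA_cov]].
have small_supp i : exists s : seq name, size s <= k /\ forall a, in_supp (rA i) a <-> a \in s.
  by have [m m_k [s [_ size_s Es]]] := deg_le (rA i); exists s; rewrite size_s.
pose sA i := proj1_sig (constructive_indefinite_description _ (small_supp i)).
have [size_sA EsA] : (forall i, size (sA i) <= k) /\ forall i a, in_supp (rA i) a <-> a \in sA i.
  by split=> i; rewrite /sA; case: constructive_indefinite_description => s [].
pose L i j := ndres (rA i) (fun a => a \in nth [::] (powerseq (sA i)) j).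
apply: (has_orbits_cover_pairs (L := L)).
move=> X; have [q [N /rep_ndres->]] := ex_rep X; have [i i_n [p pq]] := rA_cov q.
have [f Hf] := ex_pred_on (fun a => N (p a)) (sA i).
set S := [seq a <- sA i | f a]; have S_pow : S \in powerseq (sA i) by apply: filter_powerseq.
exists i, (index S (powerseq (sA i))); split=> //.
  have := S_pow; rewrite -index_mem size_powerseq => /leq_trans; apply.
  by rewrite leq_pexp2l.
exists p; rewrite /L nth_index // ndres_act pq; apply: ndres_ext => a qa.
have a_sA : pinv p a \in sA i by apply/EsA; rewrite -in_supp_nactV pq.
by rewrite mem_filter a_sA andbT (Hf _ a_sA) pinvK.
Qed.

End NameDropping.

Theorem lemmaD5 (A : ernna) (k n : nat) :
  is_ernna A -> eps_free A -> degree A k -> has_orbits (est A) n ->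
  (forall w, Lalpha A w <-> Lalpha (nd A) w) /\
  (forall w w', L0 (nd A) w -> aeq w w' -> L0 (nd A) w') /\
  degree (nd A) k /\
  (exists2 m, m <= n * 2 ^ k & has_orbits (est (nd A)) m).
Proof.
case=> [[nomA _ start_supp etr_equiv efin_equiv] [A_alpha [plain_br [_ [bar_br _]]]]] noeps deg orb.
split; [|split; [|split]].
- by move=> w; apply: Lalpha_nd.
- by move=> w w' L0w e; apply/(L0_nd_aeq _ _ _ e).
- by apply: degree_nd.
- exact: orbits_nd.
Qed.
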